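(* Let $G=\mathrm{srg}(n,k,\lambda,\mu)$ be a strongly regular graph with $\mu\ge1$. Then $\mathrm{QEC}(G)\le0$ if and only if $k-2\lambda+\mu\le4$. Moreover, $\mathrm{QEC}(G)=0$ if and only if $k-2\lambda+\mu=4$.
   Context: A graph $G=(V,E)$ is finite and simple. It is strongly regular with parameters $\mathrm{srg}(n,k,\lambda,\mu)$ if $|V|=n$, every vertex has exactly $k$ neighbours, every two adjacent vertices have exactly $\lambda$ common neighbours, and every two distinct non-adjacent vertices have exactly $\mu$ common neighbours. The hypothesis $\mu\ge1$ means in particular that there exist distinct non-adjacent vertices (so $G$ is not complete) and that $G$ is connected. For a connected graph $G=(V,E)$ with $|V|\ge2$, let $D=[d(x,y)]_{x,y\in V}$ be its distance matrix ($d$ the graph distance), and define the quadratic embedding constant \[ \mathrm{QEC}(G)=\max\{\langle f,Df\rangle : f\in\mathbb{R}^V,\ \langle f,f\rangle=1,\ \langle \mathbf{1},f\rangle=0\}, \] where $\mathbf 1$ is the all-ones vector and $\langle\cdot,\cdot\rangle$ the standard inner product. *)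

From HB Require Import structures.
From mathcomp Require Import all_boot all_order all_algebra.
From mathcomp Require Import all_classical all_reals.
Set Implicit Arguments. Unset Strict Implicit. Unset Printing Implicit Defensive.
Import Order.TTheory GRing.Theory Num.Theory.
Local Open Scope classical_set_scope.
Local Open Scope ring_scope.

(* A simple graph: vertex type T : finType, adjacency adj : rel T
   (assumed symmetric and irreflexive in the theorem). *)

Fixpoint reach (T : finType) (adj : rel T) (m : nat) (x y : T) : bool :=
  if m is m'.+1 then reach adj m' x y || [exists z, adj x z && reach adj m' z y]
  else x == y.

(* Graph distance: least m with a walk of length <= m from x to y
   (equal to #|T| when y is not reachable from x; irrelevant for connected graphs,
   where the distance is always < #|T|). *)
Definition gdist (T : finType) (adj : rel T) (x y : T) : nat :=
  find (fun m => reach adj m x y) (iota 0 #|T|).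

Definition srg (T : finType) (adj : rel T) (n k lam mu : nat) : Prop :=
  [/\ #|T| = n,
      forall x, #|[set y | adj x y]| = k,
      forall x y, adj x y -> #|[set z | adj x z && adj y z]| = lam &
      forall x y, x != y -> ~~ adj x y -> #|[set z | adj x z && adj y z]| = mu].

Definition distQF (R : realType) (T : finType) (adj : rel T) (f : T -> R) : R :=
  \sum_(x : T) \sum_(y : T) f x * (gdist adj x y)%:R * f y.

(* QEC(G) = max { <f,Df> : <f,f> = 1, <1,f> = 0 }; the max is attained
   (compact constraint set), so it equals the supremum. *)
Definition QEC (R : realType) (T : finType) (adj : rel T) : R :=
  sup [set distQF adj f | f in [set f : T -> R |
         \sum_(x : T) f x * f x = 1 /\ \sum_(x : T) f x = 0]].

From HB Require Import structures.
From mathcomp Require Import all_boot all_order all_algebra.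
From mathcomp Require Import all_classical all_reals.
From mathcomp Require Import ring lra.
Set Implicit Arguments. Unset Strict Implicit. Unset Printing Implicit Defensive.
Import Order.TTheory GRing.Theory Num.Theory.
Local Open Scope ring_scope.

(* Since mu >= 1, the graph has diameter 2, so D = 2 (J - I) - A and
   <f, D f> = -2 - <f, A f> for unit vectors f orthogonal to 1.  On that
   hyperplane the srg identity reads A^2 = (lam - mu) A + (k - mu) I, so every
   eigenvalue of A there is a root of x^2 - (lam - mu) x - (k - mu), whose roots
   are s <= 0 <= r.  Hence <f, A f> >= s, with equality at the eigenvector
   (A - r)(e_x - e_z) for any edge xz, and QEC(G) = -2 - s.  Finally
   k - 2 lam + mu = 4 - (2 + r)(2 + s) with 2 + r > 0, so QEC(G) <= 0 iff
   k - 2 lam + mu <= 4, with equality in one iff equality in the other. *)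

Lemma card_classic_set (T : finType) (P : pred T) :
  #|[set x | P x]%classic| = #|[set x | P x]|.
Proof. apply: eq_card => x; rewrite inE; apply/idP/idP; by rewrite in_setE. Qed.

Lemma sum_eq_mul (R : pzSemiRingType) (T : finType) (x : T) (g : T -> R) :
  \sum_y (x == y)%:R * g y = g x.
Proof.
rewrite (bigD1 x) //= eqxx mul1r big1 ?addr0 // => y yx.
by rewrite eq_sym (negbTE yx) mul0r.
Qed.

Lemma sqr_dot_le_norm (R : realFieldType) (T : finType) (f g : T -> R) :
  \sum_x f x * f x = 1 -> (\sum_x f x * g x) ^+ 2 <= \sum_x g x * g x.
Proof.
move=> f_unit.
have quad_ge0 b :
    0 <= b ^+ 2 * \sum_x f x * f x - 2 * b * \sum_x f x * g x + \sum_x g x * g x.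
  have -> : b ^+ 2 * \sum_x f x * f x - 2 * b * \sum_x f x * g x + \sum_x g x * g x
            = \sum_x (b * f x - g x) ^+ 2.
    rewrite !mulr_sumr -sumrB -big_split /=; apply: eq_bigr => x _; ring.
  by apply: sumr_ge0 => x _; apply: sqr_ge0.
have := quad_ge0 (\sum_x f x * g x); rewrite f_unit; lra.
Qed.

Lemma normalizable (R : rcfType) (T : finType) (g : T -> R) (x : T) :
  g x != 0 -> exists c : R, \sum_y (c * g y) * (c * g y) = 1.
Proof.
move=> gx_neq0; set q := \sum_y g y * g y.
have q_gt0 : 0 < q.
  have : g x * g x <= q.
    by rewrite /q (bigD1 x) //= lerDl; apply: sumr_ge0 => y _; rewrite -expr2 sqr_ge0.
  by apply: lt_le_trans; rewrite -expr2 exprn_even_gt0.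
exists (Num.sqrt q)^-1.
transitivity ((Num.sqrt q)^-1 ^+ 2 * q).
  by rewrite /q mulr_sumr; apply: eq_bigr => y _; ring.
by rewrite exprVn sqr_sqrtr ?mulVf ?gt_eqF // ltW.
Qed.

Lemma real_root_pair (R : rcfType) (d e : R) : 0 <= e ->
  exists r s : R, [/\ r + s = d, r * s = - e, 0 <= r & s <= r].
Proof.
move=> e_ge0; have disc_ge0 : 0 <= d ^+ 2 + 4 * e by rewrite addr_ge0 ?sqr_ge0 ?mulr_ge0.
have q2 := sqr_sqrtr disc_ge0; have q_ge0 := sqrtr_ge0 (d ^+ 2 + 4 * e).
set q := Num.sqrt _ in q2 q_ge0.
exists ((d + q) / 2), ((d - q) / 2); split.
- by field.
- transitivity ((d ^+ 2 - q ^+ 2) / 4); first by field.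
  by rewrite q2; field.
- by apply: divr_ge0 => //; nra.
- by rewrite ler_pM2r //; lra.
Qed.

Lemma sup_max (R : realType) (E : set R) (m : R) : E m -> ubound E m -> sup E = m.
Proof.
move=> Em ubm; apply/le_anti/andP; split; first by apply: ge_sup => //; exists m.
by apply: sup_upper_bound => //; split; exists m.
Qed.

Section StronglyRegular.
Variables (R : realType) (T : finType) (adj : rel T).
Hypotheses (adj_sym : symmetric adj) (adj_irr : irreflexive adj).

Definition adjop (f : T -> R) (x : T) : R := \sum_y (adj x y)%:R * f y.

Lemma adjopZ (c : R) f x : adjop (fun w => c * f w) x = c * adjop f x.
Proof. by rewrite /adjop mulr_sumr; apply: eq_bigr => y _; ring. Qed.

Lemma adjopB (c : R) f x :
  adjop (fun w => adjop f w - c * f w) x = adjop (adjop f) x - c * adjop f x.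
Proof. by rewrite /adjop mulr_sumr -sumrB; apply: eq_bigr => y _; ring. Qed.

Lemma adjop_sym (f g : T -> R) : \sum_x adjop f x * g x = \sum_x f x * adjop g x.
Proof.
rewrite /adjop; under eq_bigr do rewrite mulr_suml.
under [RHS]eq_bigr do rewrite mulr_sumr.
rewrite exchange_big /=; apply: eq_bigr => x _; apply: eq_bigr => y _.
by rewrite adj_sym; ring.
Qed.

Variables (k lam mu : nat).
Hypothesis deg : forall x, #|[set y | adj x y]| = k.
Hypothesis edge_common : forall x y, adj x y -> #|[set z | adj x z && adj y z]| = lam.
Hypothesis nonedge_common :
  forall x y, x != y -> ~~ adj x y -> #|[set z | adj x z && adj y z]| = mu.
Hypothesis mu_gt0 : (0 < mu)%N.
Hypothesis not_complete : exists x y, x != y /\ ~~ adj x y.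

Lemma sum_adjop f : \sum_x adjop f x = k%:R * \sum_x f x.
Proof.
rewrite /adjop exchange_big mulr_sumr /=; apply: eq_bigr => y _.
rewrite -mulr_suml -(deg y) -sum1dep_card natr_sum [in RHS]big_mkcond /=.
by congr (_ * _); apply: eq_bigr => x _; rewrite adj_sym; case: adj.
Qed.

Lemma card_common_neighbours x y :
  #|[set z | adj x z && adj y z]|%:R =
    (x == y)%:R * (k%:R - mu%:R) + (adj x y)%:R * (lam%:R - mu%:R) + mu%:R :> R.
Proof.
have [<-|xy] := eqVneq x y.
  rewrite adj_irr (eq_card (B := [set z | adj x z])) ?deg /=; first by ring.
  by move=> z; rewrite !inE andbb.
case xy_adj: (adj x y).
  by rewrite edge_common //=; ring.
by rewrite nonedge_common ?xy_adj //=; ring.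
Qed.

Lemma adjop2 f x :
  adjop (adjop f) x = (k%:R - mu%:R) * f x + (lam%:R - mu%:R) * adjop f x
                      + mu%:R * \sum_y f y.
Proof.
have -> : adjop (adjop f) x = \sum_y #|[set z | adj x z && adj y z]|%:R * f y.
  rewrite /adjop; under eq_bigr do rewrite mulr_sumr.
  rewrite exchange_big /=; apply: eq_bigr => y _.
  rewrite -sum1dep_card natr_sum [X in X * _]big_mkcond /= mulr_suml; apply: eq_bigr => z _.
  by rewrite (adj_sym y z) mulrA -natrM mulnb; case: (_ && _).
under eq_bigr do rewrite card_common_neighbours.
rewrite -(sum_eq_mul x f) /adjop !mulr_sumr -!big_split /=.
by apply: eq_bigr => y _; ring.
Qed.

Lemma common_neighbour x y : x != y -> ~~ adj x y -> exists z, adj x z && adj z y.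
Proof.
move=> xy xy_nadj; have := mu_gt0; rewrite -(nonedge_common xy xy_nadj) card_gt0.
by case/set0Pn => z; rewrite inE => /andP[xz yz]; exists z; rewrite xz adj_sym.
Qed.

Lemma exists_edge : exists x z, adj x z.
Proof.
have [x [y [xy xy_nadj]]] := not_complete.
by have [z /andP[xz _]] := common_neighbour xy xy_nadj; exists x, z.
Qed.

Lemma three_le_card : (2 < #|T|)%N.
Proof.
have [x [y [xy xy_nadj]]] := not_complete.
have [z /andP[xz zy]] := common_neighbour xy xy_nadj.
have z_neq_x : z != x by apply: contraTneq xz => ->; rewrite adj_irr.
have z_neq_y : z != y by apply: contraTneq zy => ->; rewrite adj_irr.
have : uniq [:: x; y; z] by rewrite /= !inE negb_or xy eq_sym z_neq_x eq_sym z_neq_y.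
by move/card_uniqP => /= card3; rewrite -card3; apply: max_card.
Qed.

Lemma mu_le_k : (mu <= k)%N.
Proof.
have [x [y [xy xy_nadj]]] := not_complete.
rewrite -(nonedge_common xy xy_nadj) -(deg x); apply: subset_leq_card.
by apply/fintype.subsetP => z; rewrite !inE => /andP[].
Qed.

Lemma gdist_diam2 x y :
  gdist adj x y = if x == y then 0%N else if adj x y then 1%N else 2%N.
Proof.
rewrite /gdist; move: three_le_card; case: #|T| => [|[|[|m]]] // _.
have reach1 u v : reach adj 1 u v = (u == v) || adj u v.
  congr orb; apply/existsP/idP => [[w /andP[uw /eqP <-]] //|uv].
  by exists v; rewrite uv eqxx.
rewrite [iota _ _]/= /= -/(reach adj 1 x y) reach1.
have [//|xy] := eqVneq x y; case xy_adj: (adj x y) => //.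
have [z /andP[xz zy]] := common_neighbour xy (negbT xy_adj).
suff -> : [exists w, adj x w && reach adj 1 w y] by [].
by apply/existsP; exists z; rewrite xz reach1 zy orbT.
Qed.

Lemma distQF_diam2 (f : T -> R) :
  distQF adj f = 2 * (\sum_x f x) ^+ 2 - 2 * \sum_x f x * f x
                 - \sum_x f x * adjop f x.
Proof.
have dist_real x y : (gdist adj x y)%:R = 2 - 2 * (x == y)%:R - (adj x y)%:R :> R.
  rewrite gdist_diam2; have [->|xy] := eqVneq x y; first by rewrite adj_irr /=; ring.
  by case: adj => /=; ring.
have row_sum x : \sum_y f x * (gdist adj x y)%:R * f y =
    2 * f x * \sum_y f y - 2 * (f x * f x) - f x * adjop f x.
  under eq_bigr do rewrite dist_real.
  transitivity (2 * f x * \sum_y f y - 2 * f x * \sum_y (x == y)%:R * f y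
                - f x * \sum_y (adj x y)%:R * f y).
    by rewrite !mulr_sumr -!sumrB; apply: eq_bigr => y _; ring.
  by rewrite sum_eq_mul /adjop; ring.
rewrite /distQF; under eq_bigr do rewrite row_sum.
by rewrite !sumrB -!mulr_sumr -mulr_suml -mulr_sumr; ring.
Qed.

Variables r s : R.
Hypotheses (rs_sum : r + s = lam%:R - mu%:R) (rs_prod : r * s = mu%:R - k%:R).
Hypotheses (r_ge0 : 0 <= r) (s_le_r : s <= r).

Lemma adjop_sub_eigen f : \sum_x f x = 0 ->
  forall x, adjop (fun w => adjop f w - r * f w) x = s * (adjop f x - r * f x).
Proof.
move=> f_perp x; rewrite adjopB adjop2 f_perp.
have -> : k%:R - mu%:R = - (r * s) :> R by rewrite rs_prod opprB.
by rewrite -rs_sum; ring.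
Qed.

(* By Cauchy-Schwarz, b := <f, A f> satisfies
   b^2 <= <Af, Af> = (k - mu) + (lam - mu) b = (r + s) b - r s, i.e. (b - r)(b - s) <= 0. *)
Lemma adjop_rayleigh_ge f :
  \sum_x f x * f x = 1 -> \sum_x f x = 0 -> s <= \sum_x f x * adjop f x.
Proof.
move=> f_unit f_perp.
have normAf : \sum_x adjop f x * adjop f x
    = (k%:R - mu%:R) * \sum_x f x * f x + (lam%:R - mu%:R) * \sum_x f x * adjop f x.
  rewrite adjop_sym; under eq_bigr do rewrite adjop2 f_perp mulr0 addr0.
  by rewrite !mulr_sumr -big_split /=; apply: eq_bigr => x _; ring.
have := sqr_dot_le_norm (adjop f) f_unit.
rewrite normAf f_unit -rs_sum -opprB -rs_prod; move: (\sum_x _ * _) => b.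
rewrite mulr1 => b_between; have : (r - b) * (s - b) <= 0 by nra.
apply: contraTT; rewrite -!ltNge => b_lt_s.
by apply: mulr_gt0; rewrite subr_gt0 // (lt_le_trans b_lt_s).
Qed.

Lemma exists_unit_eigenvector :
  exists h, [/\ \sum_x h x * h x = 1, \sum_x h x = 0 & forall x, adjop h x = s * h x].
Proof.
have [x [z xz]] := exists_edge.
pose f w : R := (x == w)%:R - (z == w)%:R.
have f_perp : \sum_w f w = 0.
  have sum_indicator (u : T) : \sum_w (u == w)%:R = 1 :> R.
    by under eq_bigr do rewrite -[_%:R]mulr1; exact: sum_eq_mul.
  by rewrite sumrB !sum_indicator subrr.
pose g w := adjop f w - r * f w.
have gx : g x = - 1 - r.
  rewrite /g /f /adjop eqxx; have zx : (z == x) = false.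
    by apply/negbTE; apply: contraTneq xz => ->; rewrite adj_irr.
  under eq_bigr do rewrite mulrBr ![(adj x _)%:R * _]mulrC.
  by rewrite sumrB !sum_eq_mul adj_irr xz zx /=; ring.
have [c unit_cg] : exists c : R, \sum_w (c * g w) * (c * g w) = 1.
  by apply: (normalizable (x := x)); rewrite gx; apply: ltr0_neq0; have := r_ge0; lra.
exists (fun w => c * g w); split => //.
  by rewrite -mulr_sumr /g sumrB sum_adjop -mulr_sumr f_perp; ring.
by move=> w; rewrite adjopZ /g adjop_sub_eigen //; ring.
Qed.

Lemma QEC_srg : QEC R adj = - (2 + s).
Proof.
have [h [h_unit h_perp h_eigen]] := exists_unit_eigenvector.
have value_unit f : \sum_x f x * f x = 1 -> \sum_x f x = 0 ->
    distQF adj f = - 2 - \sum_x f x * adjop f x.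
  by move=> f_unit f_perp; rewrite distQF_diam2 f_unit f_perp; ring.
apply: sup_max.
  exists h => //; rewrite value_unit //.
  have -> : \sum_x h x * adjop h x = s.
    by rewrite -[s]mulr1 -h_unit mulr_sumr; apply: eq_bigr => x _; rewrite h_eigen; ring.
  ring.
move=> _ [f [f_unit f_perp] <-]; rewrite value_unit //.
by have := adjop_rayleigh_ge f_unit f_perp; lra.
Qed.

End StronglyRegular.

Theorem theorem1p2 (R : realType) (T : finType) (adj : rel T) (n k lam mu : nat) :
  symmetric adj -> irreflexive adj ->
  srg adj n k lam mu -> (1 <= mu)%N ->
  (exists x y : T, x != y /\ ~~ adj x y) ->
  (QEC R adj <= 0 <-> (k%:R - 2 * lam%:R + mu%:R <= 4 :> R)) /\
  (QEC R adj = 0 <-> (k%:R - 2 * lam%:R + mu%:R = 4 :> R)).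
Proof.
move=> adj_sym adj_irr [_ deg0 edge0 nonedge0] mu_gt0 not_complete.
have deg x : #|[set y | adj x y]| = k by rewrite -card_classic_set.
have edge x y : adj x y -> #|[set z | adj x z && adj y z]| = lam.
  by move=> xy; rewrite -(edge0 x y xy) card_classic_set.
have nonedge x y : x != y -> ~~ adj x y -> #|[set z | adj x z && adj y z]| = mu.
  by move=> xy xy_nadj; rewrite -(nonedge0 x y xy xy_nadj) card_classic_set.
have e_ge0 : 0 <= k%:R - mu%:R :> R.
  by rewrite subr_ge0 ler_nat (mu_le_k deg nonedge not_complete).
have [r [s [rs_sum rs_prod r_ge0 s_le_r]]] := real_root_pair (lam%:R - mu%:R) e_ge0.
rewrite opprB in rs_prod.
rewrite (QEC_srg adj_sym adj_irr deg edge nonedge mu_gt0 not_complete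
           rs_sum rs_prod r_ge0 s_le_r).
have -> : k%:R - 2 * lam%:R + mu%:R = 4 - (2 + r) * (2 + s) :> R.
  have -> : (2 + r) * (2 + s) = 4 + 2 * (r + s) + r * s by ring.
  by rewrite rs_sum rs_prod; ring.
split; split => h; nra.
Qed.
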